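(* An oriented graph $G$ is an in-forest if and only if it is a $1$-Burling oriented graph.
   Context: Oriented graphs are finite, without loops, multiple arcs or pairs of opposite arcs. An in-tree is an oriented graph obtained from a rooted tree by orienting every edge towards the root (edge $uv$ is oriented from $u$ to $v$ iff $v$ lies on the tree path from $u$ to the root). An in-forest is an oriented forest whose connected components are in-trees (the empty graph is an in-forest). In a rooted tree $T$ with root $r$, each non-root vertex $v$ has a parent $p(v)$; children, leaves, ancestors and descendants are as usual. A branch is a sequence $v_1\dots v_k$ ($k\ge0$) with $v_i$ the parent of $v_{i+1}$; it starts at $v_1$. A Burling tree is a 4-tuple $(T,r,\ell,c)$: $T$ a rooted tree with root $r$; $\ell$ assigns to each non-leaf vertex $v$ one of its children $\ell(v)$ (the last-born of $v$); $c$ assigns to every vertex $v$ that is neither the root nor a last-born the vertex-set of a (possibly empty) branch starting at $\ell(p(v))$, and $c(v)=\emptyset$ if $v$ is the root or a last-born. The oriented graph fully derived from it has vertex-set $V(T)$ and an arc $uv$ iff $v\in c(u)$; an oriented graph is derived from the Burling tree if it is an induced subgraph of the fully derived one. An oriented graph $G$ is a $k$-Burling oriented graph if it can be derived from a Burling tree $T$ such that every branch of $T$ contains at most $k$ vertices of $G$. *)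

From mathcomp Require Import all_boot.
Set Implicit Arguments. Unset Strict Implicit. Unset Printing Implicit Defensive.

(* An oriented graph on a finite vertex type V: an arc relation without loops
   and without pairs of opposite arcs (multiple arcs are impossible for a rel). *)
Definition oriented_graph (V : finType) (arc : rel V) : Prop :=
  (forall v, ~~ arc v v) /\ (forall u v, arc u v -> ~~ arc v u).

Fixpoint pariter (W : Type) (par : W -> option W) (n : nat) (v : W) : option W :=
  match n with
  | 0 => Some v
  | n'.+1 => obind par (pariter par n' v)
  end.

(* A rooted forest given by its parent function (roots: par v = None). *)
Definition rooted_forest (W : Type) (par : W -> option W) : Prop :=
  forall v, exists n, pariter par n v = None.

Definition rooted_tree (W : Type) (par : W -> option W) (r : W) : Prop :=
  par r = None /\ forall v, exists n, pariter par n v = Some r.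

(* In-forest: obtained from a rooted forest by orienting every edge towards the
   root of its component, i.e. arcs are exactly u -> p(u). *)
Definition in_forest (V : finType) (arc : rel V) : Prop :=
  exists par : V -> option V,
    rooted_forest par /\ forall u v, arc u v = (par u == Some v).

Definition branch (W : eqType) (par : W -> option W) (s : seq W) : bool :=
  sorted (fun a b => par b == Some a) s.

Definition is_leaf (W : finType) (par : W -> option W) (v : W) : bool :=
  [forall w, par w != Some v].

Definition is_last_born (W : finType) (par : W -> option W) (l : W -> W) (w : W)
  : bool :=
  if par w is Some v then l v == w else false.

Definition burling_tree (W : finType) (par : W -> option W) (r : W)
    (l : W -> W) (c : W -> {set W}) : Prop :=
  [/\ rooted_tree par r,
      (forall v, ~~ is_leaf par v -> par (l v) = Some v) &
      (forall v,
         if (v == r) || is_last_born par l v then c v = set0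
         else exists s : seq W,
           [/\ branch par s,
               (if s is x :: _ then Some x = omap l (par v) else True) &
               c v = [set x in s]])].

(* G is a k-Burling oriented graph: G is (isomorphic, via the injection f, to)
   an induced subgraph of the graph fully derived from a Burling tree, and every
   branch of the tree contains at most k vertices of G. *)
Definition k_burling (k : nat) (V : finType) (arc : rel V) : Prop :=
  exists (W : finType) (par : W -> option W) (r : W) (l : W -> W)
         (c : W -> {set W}) (f : V -> W),
    [/\ burling_tree par r l c,
        injective f,
        (forall u v, arc u v = (f v \in c (f u))) &
        (forall s : seq W, branch par s ->
           #|[set x in s | x \in codom f]| <= k)].

From mathcomp Require Import all_boot zify.
Set Implicit Arguments. Unset Strict Implicit. Unset Printing Implicit Defensive.

(* An in-forest is derived from a Burling tree whose spine is a path
   s_M -> ... -> s_0 towards the root s_M, s_(i-1) being the last-born of s_i: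
   each forest vertex v becomes a leaf child of s_(depth v), and the branch
   s_(depth p), p starting at the last-born of s_(depth v) realises the arc
   v -> p. Leaves end branches, so every branch meets the forest at most once.

   Conversely, in a 1-Burling graph all out-neighbours of u lie in the branch
   c(u), hence there is at most one. An arc u -> v lands in a branch starting
   at the last-born sibling of u, so v is either that last-born or strictly
   deeper than u; thus 2 * depth + [last-born] increases along arcs, and
   following out-arcs from any vertex terminates. *)

Section ParentIteration.
Variables (W : Type) (par : W -> option W).

Lemma pariterS n v : pariter par n.+1 v = obind (pariter par n) (par v).
Proof.
elim: n => [|n IHn]; first by rewrite /=; case: (par v).
by rewrite -[LHS]/(obind par (pariter par n.+1 v)) IHn; case: (par v).
Qed.

Lemma pariterD m n v :
  pariter par (m + n) v = obind (pariter par m) (pariter par n v).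
Proof.
elim: m => [|m IHm]; first by rewrite /=; case: (pariter par n v).
by rewrite -[LHS]/(obind par (pariter par (m + n) v)) IHm; case: (pariter par n v).
Qed.

Lemma rooted_tree_forest r : rooted_tree par r -> rooted_forest par.
Proof.
by case=> root_r reach v; have [n rn] := reach v; exists n.+1; rewrite /= rn.
Qed.

End ParentIteration.

Section ForestDepth.
Variables (W : eqType) (par : W -> option W).
Hypothesis forest : rooted_forest par.

Lemma forest_escapes v : exists n, pariter par n v == None.
Proof. by have [n vn] := forest v; exists n; apply/eqP. Qed.

(* The number of parent steps after which we have left the forest: roots have
   depth 1. *)
Definition depth v : nat := ex_minn (forest_escapes v).

Lemma depth_leqE v k : (depth v <= k) = (pariter par k v == None).
Proof.
rewrite /depth; case: ex_minnP => m /eqP vm min_m; apply/idP/idP => [le_mk|].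
  by rewrite -(subnK le_mk) pariterD vm.
exact: min_m.
Qed.

Lemma depth_gt0 v : 0 < depth v.
Proof. by rewrite ltnNge depth_leqE. Qed.

Lemma depth_pariter i x y : pariter par i x = Some y -> depth x = depth y + i.
Proof.
move=> xy.
have shift k : (depth x <= k + i) = (depth y <= k).
  by rewrite !depth_leqE pariterD xy.
have lt_ix : i < depth x by rewrite ltnNge depth_leqE xy.
have le_xy : depth x <= depth y + i by rewrite shift.
have le_yx : depth y <= depth x - i by rewrite -shift subnK // ltnW.
by apply/eqP; rewrite eqn_leq le_xy addnC -leq_subRL // ltnW.
Qed.

Lemma depth_par u v : par u = Some v -> depth u = (depth v).+1.
Proof. by move=> uv; rewrite (@depth_pariter 1 u v) ?addn1 //= uv. Qed.

End ForestDepth.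

Lemma branch_pariter (W : eqType) (par : W -> option W) a s x :
  branch par (a :: s) -> x \in a :: s -> exists i, pariter par i x = Some a.
Proof.
elim: s a => [|b s IHs] a /=; first by rewrite inE => _ /eqP ->; exists 0.
case/andP=> /eqP ba bs; rewrite inE => /predU1P [->|xs]; first by exists 0.
by have [i xb] := IHs b bs xs; exists i.+1; rewrite /= xb.
Qed.

Lemma branch_leaves_le1 (W : finType) (par : W -> option W) s :
  branch par s -> #|[set x in s | is_leaf par x]| <= 1.
Proof.
elim: s => [|a [|b s] IHs] bs.
- by rewrite (eq_card0 (fun x => _)) // => x; rewrite !inE.
- rewrite (leq_trans (subset_leq_card (_ : _ \subset [set a]))) ?cards1 //.
  by apply/subsetP => x; rewrite !inE => /andP [].
move: bs => /= /andP [ba bs].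
have not_leaf_a : ~~ is_leaf par a by apply/forallP => /(_ b); rewrite ba.
rewrite (eq_card (B := [set x in b :: s | is_leaf par x])) ?IHs // => x.
by rewrite !inE; case: eqP => // ->; rewrite (negbTE not_leaf_a) !andbF.
Qed.

Lemma in_forest_ranked (V : finType) (arc : rel V) (rank : V -> nat) :
  (forall u v w, arc u v -> arc u w -> v = w) ->
  (forall u v, arc u v -> rank u < rank v) -> in_forest arc.
Proof.
move=> arc_fun arc_rank; pose par u := [pick v | arc u v].
have arc_par u v : arc u v = (par u == Some v).
  rewrite /par; case: pickP => [w uw|/(_ v)->] //.
  by apply/idP/eqP => [uv | [<-]] //; rewrite (arc_fun _ _ _ uv uw).
exists par; split=> // v; pose B := \max_(x : V) rank x.
elim: {v}(B - rank v).+1 {-2}v (ltnSn (B - rank v)) => // k IHk v lt_vk.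
case par_v: (par v) => [w|]; last by exists 1; rewrite /= par_v.
have lt_vw : rank v < rank w by rewrite arc_rank // arc_par par_v.
have [|n wn] := IHk w; first by have := leq_bigmax_cond (F := rank) w isT; lia.
by exists n.+1; rewrite pariterS par_v.
Qed.

Section BurlingTree.
Variables (W : finType) (par : W -> option W) (r : W) (l : W -> W) (c : W -> {set W}).
Hypothesis tree : burling_tree par r l c.

Lemma burling_tree_forest : rooted_forest par.
Proof. by have [rooted _ _] := tree; apply: rooted_tree_forest rooted. Qed.

Lemma burling_derived_branch x y : y \in c x ->
  exists p s, [/\ par x = Some p, ~~ is_last_born par l x,
                  branch par (l p :: s) & c x = [set z in l p :: s]].
Proof.
case: tree => _ _ /(_ x); case: ifP => [_ -> | /negbT]; first by rewrite inE.
rewrite negb_or => /andP [_ not_lb] [[|a s] [bs head_s cx]]; first by rewrite cx inE.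
by case: (par x) head_s => [p [->]|] // in bs cx *; exists p, s.
Qed.

Definition burling_rank x := 2 * depth burling_tree_forest x + is_last_born par l x.

Lemma burling_rank_lt x y : y \in c x -> burling_rank x < burling_rank y.
Proof.
move=> yc; have [p [s [xp not_lb bs cx]]] := burling_derived_branch yc.
move: yc; rewrite cx inE => ys; have [i yl] := branch_pariter bs ys.
have lp : par (l p) = Some p.
  by case: tree => _ -> //; apply/forallP => /(_ x); rewrite xp eqxx.
rewrite /burling_rank (negbTE not_lb) (depth_pariter _ yl).
rewrite (depth_par _ lp) (depth_par _ xp).
case: i yl => [[->]|i _]; last by lia.
by rewrite /is_last_born lp eqxx; lia.
Qed.

End BurlingTree.

Lemma burling1_in_forest (V : finType) (arc : rel V) :
  k_burling 1 arc -> in_forest arc.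
Proof.
case=> W [par [r [l [c [f [tree f_inj arcE branch_le1]]]]]].
apply: (@in_forest_ranked _ _ (burling_rank tree \o f)); last first.
  by move=> u v; rewrite arcE; apply: burling_rank_lt.
move=> u v w; rewrite !arcE => uv uw.
have [p [s [_ _ bs cu]]] := burling_derived_branch tree uv.
rewrite cu !in_set in uv uw.
by apply: f_inj; apply: (card_le1_eqP (branch_le1 _ bs)); rewrite inE codom_f andbT.
Qed.

Section SpineTree.
Variables (V : finType) (par : V -> option V).
Hypothesis forest : rooted_forest par.

Let d := depth forest.
Let M := \max_(v : V) d v.
Local Notation W := ('I_M.+1 + V)%type.

Definition spine (i : nat) : W := inl (inord i).

Definition spine_par (x : W) : option W :=
  match x with
  | inl i => if i < M then Some (spine i.+1) else None
  | inr v => Some (spine (d v))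
  end.

Definition spine_last_born (x : W) : W := if x is inl i then spine i.-1 else x.

Definition spine_derived (x : W) : {set W} :=
  if x is inr u then if par u is Some p then [set spine (d p); inr p] else set0
  else set0.

Lemma depth_le_max v : d v <= M.
Proof. exact: leq_bigmax. Qed.

Lemma spine_val (i : 'I_M.+1) : spine i = inl i.
Proof. by rewrite /spine inord_val. Qed.

Lemma spine_inj i j : i <= M -> j <= M -> (spine i == spine j) = (i == j).
Proof.
move=> le_iM le_jM; apply/eqP/eqP => [[/(congr1 val)] | -> //].
by rewrite /= !inordK.
Qed.

Lemma spine_parE i :
  i <= M -> spine_par (spine i) = if i < M then Some (spine i.+1) else None.
Proof. by move=> le_iM; rewrite /= inordK. Qed.

Lemma spine_last_bornE i : i <= M -> spine_last_born (spine i) = spine i.-1.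
Proof. by move=> le_iM; rewrite /= inordK. Qed.

Lemma spine_pariter i k :
  i + k <= M -> pariter spine_par k (spine i) = Some (spine (i + k)).
Proof.
elim: k => [|k IHk] le_ikM; first by rewrite addn0.
have lt_ikM : i + k < M by rewrite -addnS.
rewrite /= IHk ?(ltnW lt_ikM) // -[LHS]/(spine_par (spine (i + k))).
by rewrite spine_parE ?(ltnW lt_ikM) // lt_ikM addnS.
Qed.

Lemma spine_rooted : rooted_tree spine_par (spine M).
Proof.
split; first by rewrite spine_parE // ltnn.
case=> [i|v]; first by exists (M - i); rewrite -spine_val spine_pariter subnKC // -ltnS.
exists (M - d v).+1; rewrite pariterS /= spine_pariter subnKC //; exact: depth_le_max.
Qed.

Lemma inr_leaf v : is_leaf spine_par (inr v).
Proof. by apply/forallP => -[i|u] /=; [case: ifP|]. Qed.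

Lemma spine_last_bornP x :
  ~~ is_leaf spine_par x -> spine_par (spine_last_born x) = Some x.
Proof.
case: x => [i|v]; last by rewrite inr_leaf.
have le_iM : i <= M by rewrite -ltnS.
rewrite -spine_val; case: (posnP i) => [-> | i_gt0] not_leaf.
  case/negP: not_leaf; apply/forallP => -[j|y].
    rewrite -spine_val spine_parE; last by rewrite -ltnS.
    by case: ifP => // lt_jM; rewrite (inj_eq Some_inj) spine_inj.
  by rewrite /= (inj_eq Some_inj) spine_inj ?depth_le_max // -lt0n depth_gt0.
have lt_iM : i.-1 < M by rewrite prednK.
by rewrite spine_last_bornE // spine_parE ?(ltnW lt_iM) // lt_iM prednK.
Qed.

Lemma spine_burling : burling_tree spine_par (spine M) spine_last_born spine_derived.
Proof.
split; [exact: spine_rooted | exact: spine_last_bornP |].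
case=> [i|u].
  by case: ifP => // _; exists [::]; split=> //; apply/setP => x; rewrite !inE.
have -> : (inr u == spine M) || is_last_born spine_par spine_last_born (inr u) = false.
  by rewrite /is_last_born /spine /=.
rewrite [spine_derived _]/=; case par_u: (par u) => [p|]; last first.
  by exists [::]; split=> //; apply/setP => x; rewrite !inE.
exists [:: spine (d p); inr p]; split.
- by rewrite /branch /= eqxx.
- rewrite -[omap _ _]/(Some (spine_last_born (spine (d u)))).
  by rewrite spine_last_bornE ?depth_le_max // /d (depth_par _ par_u).
- by apply/setP => x; rewrite !inE.
Qed.

Lemma spine_derivedE u v : (inr v \in spine_derived (inr u)) = (par u == Some v).
Proof.
by rewrite [spine_derived _]/=; case: (par u) => [p|]; rewrite !inE /spine //= eq_sym.
Qed.

Lemma spine_branch_le1 s :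
  branch spine_par s -> #|[set x in s | x \in codom inr]| <= 1.
Proof.
move=> bs; apply: leq_trans (branch_leaves_le1 bs); apply/subset_leq_card/subsetP => x.
by rewrite !inE => /andP [-> /codomP [v ->]]; apply: inr_leaf.
Qed.

Lemma parent_arcs_burling1 (arc : rel V) :
  (forall u v, arc u v = (par u == Some v)) -> k_burling 1 arc.
Proof.
move=> arcE; exists _, spine_par, (spine M), spine_last_born, spine_derived, inr.
split; [exact: spine_burling | by move=> u v [] | | exact: spine_branch_le1].
by move=> u v; rewrite arcE spine_derivedE.
Qed.

End SpineTree.

Lemma in_forest_burling1 (V : finType) (arc : rel V) :
  in_forest arc -> k_burling 1 arc.
Proof. by case=> par [forest arcE]; apply: parent_arcs_burling1 arcE. Qed.

Theorem lemma4p1 (V : finType) (arc : rel V) :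
  oriented_graph arc -> (in_forest arc <-> k_burling 1 arc).
Proof.
(* Both sides force the graph to be oriented on their own. *)
by move=> _; split; [apply: in_forest_burling1 | apply: burling1_in_forest].
Qed.
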